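(* Let $K$ be a field, $0<n<\omega$, and $(R_i\mid i<n)$ a sequence of $K$-algebras such that $R_0$ possesses a strong multiplicative basis $B_0$ containing a non-zero idempotent $e$, and each $R_i$ ($0<i<n$) has a multiplicative basis. Then the $K$-algebra $R=\prod_{i<n}R_i$ has a strong multiplicative basis.
   Context: A $K$-linear basis $B$ of a $K$-algebra is multiplicative if for all $b,b'\in B$ either $bb'=0$ or $bb'\in B$, and strong multiplicative if $bb'\in B$ for all $b,b'\in B$. *)

From HB Require Import structures.
From mathcomp Require Import all_boot all_order all_algebra.
Set Implicit Arguments. Unset Strict Implicit. Unset Printing Implicit Defensive.
Import Order.TTheory GRing.Theory Num.Theory.
Local Open Scope ring_scope.

Record kalg (K : fieldType) := KAlg {
  kcar :> lmodType K;
  kmul : kcar -> kcar -> kcar;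
  kmulA : forall x y z, kmul x (kmul y z) = kmul (kmul x y) z;
  kmulDl : forall x y z, kmul (x + y) z = kmul x z + kmul y z;
  kmulDr : forall x y z, kmul x (y + z) = kmul x y + kmul x z;
  kmulZl : forall (a : K) x y, kmul (a *: x) y = a *: kmul x y;
  kmulZr : forall (a : K) x y, kmul x (a *: y) = a *: kmul x y
}.
Arguments kmul {K} _ _ _.

Definition lin_indep (K : fieldType) (V : lmodType K) (B : V -> Prop) :=
  forall (s : seq V) (c : V -> K), uniq s -> (forall v, v \in s -> B v) ->
    \sum_(v <- s) c v *: v = 0 -> forall v, v \in s -> c v = 0.

Definition spanning (K : fieldType) (V : lmodType K) (B : V -> Prop) :=
  forall x : V, exists (s : seq V) (c : V -> K),
    (forall v, v \in s -> B v) /\ x = \sum_(v <- s) c v *: v.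

Definition is_basis (K : fieldType) (V : lmodType K) (B : V -> Prop) :=
  lin_indep B /\ spanning B.

Definition mult_basis (K : fieldType) (A : kalg K) (B : A -> Prop) :=
  is_basis B /\ forall b b', B b -> B b' -> kmul A b b' = 0 \/ B (kmul A b b').

Definition strong_mult_basis (K : fieldType) (A : kalg K) (B : A -> Prop) :=
  is_basis B /\ forall b b', B b -> B b' -> B (kmul A b b').

Section Product.
Variables (K : fieldType) (n : nat) (R : 'I_n -> kalg K).

Definition prodT := {dffun forall i : 'I_n, (R i : lmodType K)}.
HB.instance Definition _ := Choice.on prodT.

Definition pzero : prodT := [ffun i => 0].
Definition padd (x y : prodT) : prodT := [ffun i => x i + y i].
Definition popp (x : prodT) : prodT := [ffun i => - x i].
Definition pscale (a : K) (x : prodT) : prodT := [ffun i => a *: x i].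
Definition pmul (x y : prodT) : prodT := [ffun i => kmul (R i) (x i) (y i)].

Lemma paddA : associative padd.
Proof. by move=> x y z; apply/ffunP=> i; rewrite !ffunE addrA. Qed.
Lemma paddC : commutative padd.
Proof. by move=> x y; apply/ffunP=> i; rewrite !ffunE addrC. Qed.
Lemma padd0 : left_id pzero padd.
Proof. by move=> x; apply/ffunP=> i; rewrite !ffunE add0r. Qed.
Lemma paddN : left_inverse pzero popp padd.
Proof. by move=> x; apply/ffunP=> i; rewrite !ffunE addNr. Qed.

HB.instance Definition _ := GRing.isZmodule.Build prodT paddA paddC padd0 paddN.

Lemma pscaleA a b (x : prodT) : pscale a (pscale b x) = pscale (a * b) x.
Proof. by apply/ffunP=> i; rewrite !ffunE scalerA. Qed.
Lemma pscale1 : left_id 1 pscale.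
Proof. by move=> x; apply/ffunP=> i; rewrite !ffunE scale1r. Qed.
Lemma pscaleDr : right_distributive pscale padd.
Proof. by move=> a x y; apply/ffunP=> i; rewrite !ffunE scalerDr. Qed.
Lemma pscaleDl (x : prodT) : {morph pscale^~ x : a b / a + b >-> padd a b}.
Proof. by move=> a b; apply/ffunP=> i; rewrite !ffunE scalerDl. Qed.

HB.instance Definition _ :=
  GRing.Zmodule_isLmodule.Build K prodT pscaleA pscale1 pscaleDr pscaleDl.

Lemma pmulA x y z : pmul x (pmul y z) = pmul (pmul x y) z.
Proof. by apply/ffunP=> i; rewrite !ffunE kmulA. Qed.
Lemma pmulDl (x y z : prodT) : pmul (x + y) z = pmul x z + pmul y z.
Proof. by apply/ffunP=> i; rewrite /pmul [x + y]/(padd x y) [_ + _]/(padd _ _) !ffunE kmulDl. Qed.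
Lemma pmulDr (x y z : prodT) : pmul x (y + z) = pmul x y + pmul x z.
Proof. by apply/ffunP=> i; rewrite /pmul [y + z]/(padd y z) [_ + _]/(padd _ _) !ffunE kmulDr. Qed.
Lemma pmulZl (a : K) (x y : prodT) : pmul (a *: x) y = a *: pmul x y.
Proof. by apply/ffunP=> i; rewrite /pmul [a *: x]/(pscale a x) [a *: _]/(pscale a _) !ffunE kmulZl. Qed.
Lemma pmulZr (a : K) (x y : prodT) : pmul x (a *: y) = a *: pmul x y.
Proof. by apply/ffunP=> i; rewrite /pmul [a *: y]/(pscale a y) [a *: _]/(pscale a _) !ffunE kmulZr. Qed.

Definition prod_kalg : kalg K :=
  @KAlg K prodT pmul pmulA pmulDl pmulDr pmulZl pmulZr.

End Product.

(* Take as basis the vectors (b, 0, ..., 0) with b in B0 and, for i <> 0 and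
   c in B_i, the vectors with e in slot 0, c in slot i and 0 elsewhere.  Since B0
   is strong and e is idempotent, the product of two of them is again of the
   first kind, except that two vectors sharing a slot i multiply to e + c c';
   a zero product c c' = 0 in R_i is thus absorbed by e.  Linear independence
   is read off coordinatewise: projecting onto a slot i <> 0 kills the
   coefficients of the vectors supported there, and projecting onto slot 0
   then kills the remaining ones. *)

From HB Require Import structures.
From mathcomp Require Import all_boot all_order all_algebra.
From Stdlib Require Import ChoiceFacts IndefiniteDescription.
Import GRing.Theory.
Set Implicit Arguments. Unset Strict Implicit. Unset Printing Implicit Defensive.
Local Open Scope ring_scope.

Lemma kmul0l (K : fieldType) (A : kalg K) (x : A) : kmul A 0 x = 0.
Proof. by have := kmulZl 0 0 x; rewrite !scale0r. Qed.

Lemma kmul0r (K : fieldType) (A : kalg K) (x : A) : kmul A x 0 = 0.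
Proof. by have := kmulZr 0 x 0; rewrite !scale0r. Qed.

Section LinearCombinations.
Variables (K : fieldType) (V : lmodType K).
Implicit Types (B : V -> Prop) (x : V).

Definition in_span B x :=
  exists s : seq (K * V), (forall p, p \in s -> B p.2) /\ x = \sum_(p <- s) p.1 *: p.2.

Lemma in_span_gen B x : B x -> in_span B x.
Proof.
by exists [:: (1, x)]; rewrite big_seq1 scale1r; split=> // p; rewrite mem_seq1 => /eqP->.
Qed.

Lemma in_spanD B x y : in_span B x -> in_span B y -> in_span B (x + y).
Proof.
move=> [s [Bs ->]] [t [Bt ->]]; exists (s ++ t); rewrite big_cat; split=> // p.
by rewrite mem_cat => /orP[/Bs|/Bt].
Qed.

Lemma in_spanZ B a x : in_span B x -> in_span B (a *: x).
Proof.
move=> [s [Bs ->]]; exists [seq (a * p.1, p.2) | p <- s]; split.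
  by move=> _ /mapP[p ps ->]; exact: (Bs p ps).
by rewrite big_map scaler_sumr; apply: eq_bigr => p _; rewrite scalerA.
Qed.

Lemma in_span_sum B (I : eqType) (r : seq I) (F : I -> V) :
  {in r, forall i, in_span B (F i)} -> in_span B (\sum_(i <- r) F i).
Proof.
move=> spanF; rewrite big_seq; apply: (big_ind (in_span B)) => //.
- by exists [::]; rewrite big_nil.
- exact: in_spanD.
Qed.

Lemma sum_pairs_undup (s : seq (K * V)) :
  \sum_(p <- s) p.1 *: p.2 =
  \sum_(v <- undup (unzip2 s)) (\sum_(p <- s | p.2 == v) p.1) *: v.
Proof.
under [RHS]eq_bigr do rewrite scaler_suml big_mkcond.
rewrite exchange_big; apply: eq_big_seq => p ps.
rewrite (bigD1_seq p.2) ?undup_uniq ?mem_undup ?map_f //= eqxx big1 ?addr0 // => v.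
by rewrite eq_sym => /negbTE->.
Qed.

Lemma spanning_in_span B : (forall x, in_span B x) -> spanning B.
Proof.
move=> spanB x; have [s [Bs ->]] := spanB x.
exists (undup (unzip2 s)), (fun v => \sum_(p <- s | p.2 == v) p.1); split.
  by move=> v; rewrite mem_undup => /mapP[p /Bs Bp ->].
exact: sum_pairs_undup.
Qed.

Lemma lin_indep_neq0 B x : lin_indep B -> B x -> x != 0.
Proof.
move=> indB Bx; apply/eqP => x0.
have Bs v : v \in [:: x] -> B v by rewrite mem_seq1 => /eqP->.
have rel : \sum_(v <- [:: x]) (fun=> 1 : K) v *: v = 0 by rewrite big_seq1 scale1r.
by have /eqP := indB [:: x] _ isT Bs rel x (mem_head _ _); rewrite oner_eq0.
Qed.

Lemma lin_indep_proj_coef0 (W : lmodType K) (f : {linear V -> W}) (C : W -> Prop)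
    (S : pred V) (s : seq V) (c : V -> K) :
  lin_indep C -> uniq s -> {in [seq v <- s | S v] &, injective f} ->
  {in s, forall v, S v -> C (f v)} -> {in s, forall v, ~~ S v -> c v *: f v = 0} ->
  \sum_(v <- s) c v *: v = 0 -> {in s, forall v, S v -> c v = 0}.
Proof.
move=> indC uniq_s inj_f Cf off_S rel v sv Sv.
set sS := [seq v <- s | S v].
have mem_sS u : (u \in sS) = S u && (u \in s) by rewrite mem_filter.
pose d w := c (nth 0 sS (index w (map f sS))).
have d_f : {in sS, forall u, d (f u) = c u} by move=> u su; rewrite /d nth_index_map.
rewrite -d_f ?mem_sS ?Sv //; apply: (indC (map f sS)); last by rewrite map_f ?mem_sS ?Sv.
- by rewrite map_inj_in_uniq // filter_uniq.
- by move=> w /mapP[u]; rewrite mem_sS => /andP[Su su] ->; exact: Cf.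
transitivity (f (\sum_(v <- s) c v *: v)); last by rewrite rel linear0.
rewrite linear_sum big_map big_filter [RHS](bigID S) /=.
rewrite [X in _ = _ + X]big_seq_cond [X in _ = _ + X]big1 ?addr0 => [|u /andP[su nSu]].
  rewrite big_seq_cond [RHS]big_seq_cond; apply: eq_bigr => u /andP[su Su].
  by rewrite linearZ d_f // mem_sS Su.
by rewrite linearZ; exact: off_S.
Qed.

End LinearCombinations.

Section ProductAlgebra.
Variables (K : fieldType) (n : nat) (R : 'I_n -> kalg K).
Implicit Types (x y : prodT R).

Lemma prod_zeroE j : (0 : prodT R) j = 0.
Proof. by rewrite /= ffunE. Qed.

Lemma prod_addE x y j : (x + y) j = x j + y j.
Proof. by rewrite /= ffunE. Qed.

Lemma prod_scaleE a x j : (a *: x) j = a *: x j.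
Proof. by rewrite /= ffunE. Qed.

Lemma prod_mulE x y j : kmul (prod_kalg R) x y j = kmul (R j) (x j) (y j).
Proof. by rewrite /= ffunE. Qed.

Lemma prod_sumE (I : Type) (r : seq I) (F : I -> prodT R) j :
  (\sum_(k <- r) F k) j = \sum_(k <- r) F k j.
Proof.
by apply: (big_morph (fun x : prodT R => x j)) => [x y|]; rewrite ?prod_addE ?prod_zeroE.
Qed.

Definition coord j (x : prodT R) : R j := x j.

Lemma coord_is_linear j : linear (coord j).
Proof. by move=> a x y; rewrite /coord prod_addE prod_scaleE. Qed.

HB.instance Definition _ j :=
  GRing.isLinear.Build K (prodT R) (R j) *:%R (coord j) (@coord_is_linear j).

Definition single i (b : R i) : prodT R :=
  [ffun j => match i =P j return (R j : Type) with
             | ReflectT eq_ij => ecast k (R k : Type) eq_ij b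
             | ReflectF _ => 0 end].

Lemma single_at i (b : R i) : single b i = b.
Proof. by rewrite ffunE; case: eqP => // eq_ii; rewrite (eq_axiomK eq_ii). Qed.

Lemma single_off i j (b : R i) : i != j -> single b j = 0.
Proof. by rewrite ffunE; case: eqP. Qed.

Lemma single_is_linear i : linear (@single i).
Proof.
move=> a b c; apply/ffunP => j; rewrite prod_addE prod_scaleE.
have [<-|ne_ij] := eqVneq i j; first by rewrite !single_at.
by rewrite !single_off // scaler0 addr0.
Qed.

HB.instance Definition _ i :=
  GRing.isLinear.Build K (R i) (prodT R) *:%R (@single i) (@single_is_linear i).

Lemma prod_sum_single x : x = \sum_(j < n) single (x j).
Proof.
apply/ffunP => j; rewrite prod_sumE (bigD1 j) //= single_at big1 ?addr0 // => i ne_ij.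
by rewrite single_off.
Qed.

Lemma single_mul i (b c : R i) :
  kmul (prod_kalg R) (single b) (single c) = single (kmul (R i) b c).
Proof.
apply/ffunP => j; rewrite prod_mulE.
have [<-|ne_ij] := eqVneq i j; first by rewrite !single_at.
by rewrite !single_off // kmul0l.
Qed.

Lemma single_mul_off i j (b : R i) (c : R j) :
  i != j -> kmul (prod_kalg R) (single b) (single c) = 0.
Proof.
move=> ne_ij; apply/ffunP => k; rewrite prod_mulE prod_zeroE.
have [<-|ne_ik] := eqVneq i k; first by rewrite (single_off c) 1?eq_sym // kmul0r.
by rewrite single_off // kmul0l.
Qed.

End ProductAlgebra.

Section ProductBasis.
Variables (K : fieldType) (n : nat) (R : 'I_n -> kalg K) (i0 : 'I_n).
Variables (B0 : R i0 -> Prop) (e : R i0) (B : forall i, R i -> Prop).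
Hypotheses (B0_smult : strong_mult_basis B0) (B0e : B0 e) (ee : kmul (R i0) e e = e).
Hypothesis B_mult : forall i, i != i0 -> mult_basis (@B i).

Definition prod_basis (x : prodT R) : Prop :=
  (exists2 b, B0 b & x = single b) \/
  (exists i (c : R i), [/\ i != i0, B c & x = single e + single c]).

Lemma prod_basis_mul x y :
  prod_basis x -> prod_basis y -> prod_basis (kmul (prod_kalg R) x y).
Proof.
have B0M b b' : B0 b -> B0 b' -> prod_basis (single (kmul (R i0) b b')).
  by move=> Bb Bb'; left; exists (kmul _ b b') => //; apply: B0_smult.2.
move=> [[b Bb ->]|[i [c [ni0 Bc ->]]]] [[b' Bb' ->]|[i' [c' [ni'0 Bc' ->]]]].
- by rewrite single_mul; apply: B0M.
- by rewrite kmulDr single_mul single_mul_off 1?eq_sym // addr0; apply: B0M.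
- by rewrite kmulDl single_mul single_mul_off // addr0; apply: B0M.
rewrite kmulDl !kmulDr single_mul ee (single_mul_off c e ni0).
rewrite (single_mul_off e c') 1?eq_sym // addr0 add0r.
have [eq_ii'|ne_ii'] := eqVneq i i'; last first.
  by rewrite single_mul_off // addr0; left; exists e.
subst i'; rewrite single_mul.
have [->|Bcc'] := (B_mult ni0).2 c c' Bc Bc'.
  by rewrite linear0 addr0; left; exists e.
by right; exists i, (kmul (R i) c c').
Qed.

Lemma in_span_single i (y : R i) : in_span prod_basis (single y).
Proof.
have [eq_ii0|ni0] := eqVneq i i0.
  subst i; have [s [c [Bs ->]]] := B0_smult.1.2 y.
  rewrite linear_sum; apply: in_span_sum => b bs; rewrite linearZ.
  by apply/in_spanZ/in_span_gen; left; exists b; first exact: Bs.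
have single_B (b : R i) : B b -> in_span prod_basis (single b).
  move=> Bb; rewrite -(addKr (single e) (single b)) -scaleN1r.
  apply: in_spanD; first by apply/in_spanZ/in_span_gen; left; exists e.
  by apply: in_span_gen; right; exists i, b.
have [s [c [Bs ->]]] := (B_mult ni0).1.2 y.
rewrite linear_sum; apply: in_span_sum => b bs; rewrite linearZ.
by apply/in_spanZ/single_B/Bs.
Qed.

Lemma prod_basis_spanning : spanning prod_basis.
Proof.
apply: spanning_in_span => x; rewrite (prod_sum_single x).
by apply: in_span_sum => j _; exact: in_span_single.
Qed.

Lemma prod_basis_coord_neq0 x j :
  prod_basis x -> j != i0 -> x j != 0 -> B (x j) /\ x = single e + single (x j).
Proof.
move=> [[b _ ->]|[i [c [ni0 Bc ->]]]] nj0; first by rewrite single_off 1?eq_sym ?eqxx.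
rewrite prod_addE (single_off e) 1?eq_sym // add0r.
by have [<-|ne_ij] := eqVneq i j; rewrite ?single_at ?single_off ?eqxx.
Qed.

Lemma prod_basis_coord0 x :
  prod_basis x -> (forall j, j != i0 -> x j = 0) -> B0 (x i0) /\ x = single (x i0).
Proof.
move=> [[b Bb ->]|[i [c [ni0 Bc ->]]]] x0; first by rewrite single_at.
have := x0 i ni0; rewrite prod_addE single_at single_off 1?eq_sym // add0r => c0.
by have := lin_indep_neq0 (B_mult ni0).1.1 Bc; rewrite c0 eqxx.
Qed.

Lemma prod_basis_lin_indep : lin_indep prod_basis.
Proof.
move=> s c uniq_s Bs rel.
have off_i0 v j : v \in s -> j != i0 -> v j != 0 -> c v = 0.
  move=> sv nj0 vj; apply: (lin_indep_proj_coef0 (f := coord j) (C := @B j)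
    (S := fun v => v j != 0)) uniq_s _ _ _ rel v sv vj.
  - exact: (B_mult nj0).1.1.
  - move=> u w; rewrite !mem_filter => /andP[uj su] /andP[wj sw] /= eq_uw.
    rewrite /coord in eq_uw; rewrite (prod_basis_coord_neq0 (Bs u su) nj0 uj).2.
    by rewrite (prod_basis_coord_neq0 (Bs w sw) nj0 wj).2 eq_uw.
  - by move=> u su uj; exact: (prod_basis_coord_neq0 (Bs u su) nj0 uj).1.
  - by move=> u _ /negPn/eqP uj; rewrite /= /coord uj scaler0.
pose S (v : prodT R) := [forall j, (j != i0) ==> (v j == 0)].
have S_coord0 v : S v -> forall j, j != i0 -> v j = 0.
  by move=> /forallP Sv j nj0; apply/eqP/(implyP (Sv j)).
have off_S v : v \in s -> ~~ S v -> c v = 0.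
  by move=> sv /forallPn[j]; rewrite negb_imply => /andP[nj0 vj]; exact: off_i0 nj0 vj.
move=> v sv; have [Sv|] := boolP (S v); last exact: off_S.
apply: (lin_indep_proj_coef0 (f := coord i0) (C := B0) (S := S)) uniq_s _ _ _ rel v sv Sv.
- exact: B0_smult.1.1.
- move=> u w; rewrite !mem_filter => /andP[Su su] /andP[Sw sw] /= eq_uw.
  rewrite /coord in eq_uw; rewrite (prod_basis_coord0 (Bs u su) (S_coord0 u Su)).2.
  by rewrite (prod_basis_coord0 (Bs w sw) (S_coord0 w Sw)).2 eq_uw.
- by move=> u su Su; exact: (prod_basis_coord0 (Bs u su) (S_coord0 u Su)).1.
- by move=> u su nSu; rewrite off_S ?scale0r.
Qed.

Lemma prod_strong_mult_basis : @strong_mult_basis K (prod_kalg R) prod_basis.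
Proof.
split; last exact: prod_basis_mul.
by split; [exact: prod_basis_lin_indep | exact: prod_basis_spanning].
Qed.

End ProductBasis.

Theorem lemma5p5 (K : fieldType) (n : nat) (hn : (0 < n)%N)
    (R : 'I_n -> kalg K) :
  (exists (B0 : R (Ordinal hn) -> Prop) (e : R (Ordinal hn)),
      strong_mult_basis B0 /\ B0 e /\ e != 0 /\ kmul (R (Ordinal hn)) e e = e) ->
  (forall i : 'I_n, i != Ordinal hn -> exists B : R i -> Prop, mult_basis B) ->
  exists B : prod_kalg R -> Prop, strong_mult_basis B.
Proof.
move=> [B0 [e [B0_smult [B0e [_ ee]]]]] mult_bases.
have [B B_mult] : exists B : forall i, R i -> Prop,
    forall i, i != Ordinal hn -> mult_basis (B i).
  apply: (non_dep_dep_functional_choice functional_choice (fun i : 'I_n => R i -> Prop)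
    (fun i B => i != Ordinal hn -> mult_basis B)) => i.
  have [_|ni0] := boolP (i == Ordinal hn); first by exists (fun=> False).
  by have [B mB] := mult_bases i ni0; exists B.
by exists (prod_basis B0 e B); exact: prod_strong_mult_basis.
Qed.
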